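(* For every ideal $I\subset\mathbb{K}[S_M]$ and every sparse order $\prec$ on $\mathbb{K}[S_M]$, there exists a finite sparse Gröbner basis of $I$ with respect to $\prec$.
   Context: Let $\mathbb{K}$ be a field of characteristic $0$, $M\subset\mathbb{R}^n$ a polytope with $0\in M$, $S_M\subset\mathbb{Z}^n$ the affine semigroup generated by $M\cap\mathbb{Z}^n$ and $S_M^h\subset\mathbb{Z}^{n+1}$ the one generated by $\{(s,1):s\in M\cap\mathbb{Z}^n\}$, both assumed pointed. $\mathbb{K}[S]$ is the semigroup algebra with monomials $X^s$, $X^sX^t=X^{s+t}$. The affine degree $\delta^A(X^s)$ of a monomial of $\mathbb{K}[S_M]$ is the least $d\in\mathbb{N}$ with $(s,d)\in S_M^h$; the homogenization of a monomial is $\chi^{-1}(X^s)=X^{(s,\delta^A(X^s))}\in\mathbb{K}[S_M^h]$, and for $X^{(s,d)}\in\mathbb{K}[S_M^h]$ its sparse degree is $\delta(X^{(s,d)})=\delta^A(X^s)$. A sparse order is defined from a monomial order $<_M$ on $\mathbb{K}[S_M]$ by $X^s\prec X^r$ iff $\delta^A(X^s)<\delta^A(X^r)$, or equality and $X^s<_MX^r$. Divisibility: $X^{(s,d_s)}\mid_\delta X^{(r,d_r)}$ if some monomial $X^{(t,d_t)}\in\mathbb{K}[S_M^h]$ satisfies $X^{(s,d_s)}X^{(t,d_t)}=X^{(r,d_r)}$ and $\delta(X^{(s,d_s)})+\delta(X^{(t,d_t)})=\delta(X^{(r,d_r)})$; for monomials of $\mathbb{K}[S_M]$, $X^s\mid_\delta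 X^r$ iff $\chi^{-1}(X^s)\mid_\delta\chi^{-1}(X^r)$. A sparse Gröbner basis of $I$ w.r.t. $\prec$ is a subset of $I$ generating $I$ such that every nonzero $f\in I$ has some element $g$ of it with $\mathrm{LM}_\prec(g)\mid_\delta\mathrm{LM}_\prec(f)$. *)

From HB Require Import structures.
From mathcomp Require Import all_boot all_order all_algebra.
From mathcomp Require Import finmap.
From mathcomp Require Import reals.
From mathcomp.multinomials Require Import monalg.

Set Implicit Arguments.
Unset Strict Implicit.
Unset Printing Implicit Defensive.

Import Order.TTheory GRing.Theory Num.Theory.
Local Open Scope ring_scope.

Definition inPolytope (R : realType) (n : nat) (V : seq 'rV[R]_n)
    (x : 'rV[R]_n) : Prop :=
  exists lam : 'I_(size V) -> R,
    (forall i, 0 <= lam i) /\ \sum_i lam i = 1 /\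
    x = \sum_i lam i *: V`_i.

Definition latPt (R : realType) (n : nat) (V : seq 'rV[R]_n)
    (z : 'rV[int]_n) : Prop :=
  inPolytope V (map_mx (fun k : int => k%:~R : R) z).

Inductive inSM (R : realType) (n : nat) (V : seq 'rV[R]_n) : 'rV[int]_n -> Prop :=
  | SM0 : inSM V 0
  | SMadd a s : latPt V a -> inSM V s -> inSM V (a + s).

(* S_M^h : generated by the (s,1), s \in M \cap Z^n; an element (s,d) of
   Z^{n+1} is represented by the pair s, d (its last coordinate is always
   a natural number). *)
Inductive inShM (R : realType) (n : nat) (V : seq 'rV[R]_n) :
    'rV[int]_n -> nat -> Prop :=
  | Sh0 : inShM V 0 0
  | Shadd a s d : latPt V a -> inShM V s d -> inShM V (a + s) d.+1.

Definition pointedSM (R : realType) (n : nat) (V : seq 'rV[R]_n) : Prop :=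
  forall s, inSM V s -> inSM V (- s) -> s = 0.

Definition isAdeg (R : realType) (n : nat) (V : seq 'rV[R]_n)
    (s : 'rV[int]_n) (d : nat) : Prop :=
  inShM V s d /\ forall d', inShM V s d' -> (d <= d')%N.

(* Elements of K[Z^n] are finitely supported
   functions {malg K['rV[int]_n]}; K[S_M] is the subset of those with
   support in S_M; the product is X^s X^t = X^(s+t) extended bilinearly. *)
Definition inKS (R : realType) (n : nat) (V : seq 'rV[R]_n) (K : fieldType)
    (f : {malg K['rV[int]_n]}) : Prop :=
  forall s, s \in msupp f -> inSM V s.

Definition smul (n : nat) (K : fieldType) (f g : {malg K['rV[int]_n]})
    : {malg K['rV[int]_n]} :=
  \sum_(s <- msupp f) \sum_(t <- msupp g) << f@_s * g@_t *g (s + t) >>.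

Definition isIdeal (R : realType) (n : nat) (V : seq 'rV[R]_n) (K : fieldType)
    (I : {malg K['rV[int]_n]} -> Prop) : Prop :=
  [/\ forall f, I f -> inKS V f,
      I 0,
      forall f g, I f -> I g -> I (f - g) &
      forall f g, inKS V f -> I g -> I (smul f g)].

Definition monomialOrder (R : realType) (n : nat) (V : seq 'rV[R]_n)
    (lt : 'rV[int]_n -> 'rV[int]_n -> Prop) : Prop :=
  [/\ forall s, inSM V s -> ~ lt s s,
      forall s t u, inSM V s -> inSM V t -> inSM V u ->
        lt s t -> lt t u -> lt s u,
      forall s t, inSM V s -> inSM V t -> s <> t -> lt s t \/ lt t s,
      forall s t u, inSM V s -> inSM V t -> inSM V u ->
        lt s t -> lt (s + u) (t + u) &
      forall P : 'rV[int]_n -> Prop, (exists s, inSM V s /\ P s) ->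
        exists m, [/\ inSM V m, P m & forall s, inSM V s -> P s -> ~ lt s m]].

Definition sparseLt (R : realType) (n : nat) (V : seq 'rV[R]_n)
    (lt : 'rV[int]_n -> 'rV[int]_n -> Prop) (s r : 'rV[int]_n) : Prop :=
  exists ds dr, [/\ isAdeg V s ds, isAdeg V r dr &
                    (ds < dr)%N \/ (ds = dr /\ lt s r)].

Definition sdivh (R : realType) (n : nat) (V : seq 'rV[R]_n)
    (s : 'rV[int]_n) (ds : nat) (r : 'rV[int]_n) (dr : nat) : Prop :=
  exists t dt, [/\ inShM V t dt, s + t = r, (ds + dt)%N = dr &
    exists es et er, [/\ isAdeg V s es, isAdeg V t et, isAdeg V r er &
                        (es + et)%N = er]].

(* For monomials of K[S_M]: X^s |_delta X^r iff
   chi^{-1}(X^s) |_delta chi^{-1}(X^r) *)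
Definition sdiv (R : realType) (n : nat) (V : seq 'rV[R]_n)
    (s r : 'rV[int]_n) : Prop :=
  exists ds dr, [/\ isAdeg V s ds, isAdeg V r dr & sdivh V s ds r dr].

Definition isLM (n : nat) (K : fieldType)
    (lt : 'rV[int]_n -> 'rV[int]_n -> Prop)
    (f : {malg K['rV[int]_n]}) (s : 'rV[int]_n) : Prop :=
  s \in msupp f /\ forall t, t \in msupp f -> t <> s -> lt t s.

Definition sparseGB (R : realType) (n : nat) (V : seq 'rV[R]_n) (K : fieldType)
    (lt : 'rV[int]_n -> 'rV[int]_n -> Prop)
    (I : {malg K['rV[int]_n]} -> Prop) (G : seq {malg K['rV[int]_n]}) : Prop :=
  [/\ forall g, g \in G -> I g,
      forall f, I f -> exists h : 'I_(size G) -> {malg K['rV[int]_n]},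
        (forall i, inKS V (h i)) /\ f = \sum_i smul (h i) G`_i &
      forall f, I f -> f <> 0 ->
        exists2 g, g \in G &
          exists sg sf, [/\ isLM (sparseLt V lt) g sg,
                            isLM (sparseLt V lt) f sf & sdiv V sg sf]].

(** The lattice points of the polytope form a finite set [P], and every
    monomial [X^(s,d)] of [K[S_M^h]] is a product of [d] generators [X^(p,1)],
    [p \in P], i.e. an exponent vector [a : N^P] with [s = sum a_p p] and
    [d = sum a_p].  By Dickson's lemma the exponent vectors [a] with
    [sum a_p = deg^A(sum a_p p)] whose monomial leads a nonzero element of [I]
    have finitely many minimal elements; the leaders of [I] attached to them
    form [G].  If [b <= a] componentwise, then [X^(comb b)] [delta]-divides
    [X^(comb a)] precisely because both weights are the affine degrees, which
    gives the divisibility condition.  That [G] generates [I] is the usual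
    division argument, by induction along the sparse order, which is a
    well-order on [S_M] (least affine degree first, then [<_M]) compatible
    with multiplication by [delta]-divisors. *)
From HB Require Import structures.
From mathcomp Require Import all_boot all_order all_algebra.
From mathcomp Require Import finmap.
From mathcomp Require Import reals.
From mathcomp.multinomials Require Import monalg.
From mathcomp Require Import boolp.
From Stdlib Require List.

Set Implicit Arguments.
Unset Strict Implicit.
Unset Printing Implicit Defensive.

Import Order.TTheory GRing.Theory Num.Theory.

Definition le_upto (k : nat) (a b : nat -> nat) := forall i, i < k -> a i <= b i.

Definition finitely_based (k : nat) := forall A : (nat -> nat) -> Prop,
  exists B : seq (nat -> nat), (forall b, List.In b B -> A b) /\
    forall a, A a -> exists2 b, List.In b B & le_upto k b a.

Lemma le_upto_trans k a b c : le_upto k a b -> le_upto k b c -> le_upto k a c.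
Proof. by move=> lab lbc i ik; apply: leq_trans (lab i ik) (lbc i ik). Qed.

Lemma finitely_based0 : finitely_based 0.
Proof.
move=> A; have [[a Aa]|nA] := pselect (exists a, A a).
  by exists [:: a]; split=> [b [<-|[]] //|a' _]; exists a; [left | move=> i].
by exists [::]; split=> // a Aa; case: nA; exists a.
Qed.

Lemma finitely_based_slices k : finitely_based k ->
  forall (A : (nat -> nat) -> Prop) M, exists B : seq (nat -> nat),
    (forall b, List.In b B -> A b /\ b k <= M) /\
    forall a, A a -> a k <= M ->
      exists2 b, List.In b B & le_upto k b a /\ b k = a k.
Proof.
move=> FBk A; elim=> [|M [B' [B'A B'min]]].
  have [B [BA Bmin]] := FBk (fun a => A a /\ a k = 0).
  exists B; split=> [b /BA [Ab ->] //|a Aa].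
  rewrite leqn0 => /eqP ak; have [b inb lba] := Bmin a (conj Aa ak).
  by exists b => //; split=> //; have [_ ->] := BA b inb.
have [B [BA Bmin]] := FBk (fun a => A a /\ a k = M.+1).
exists (B' ++ B); split=> [b /List.in_app_iff [/B'A [Ab /leqW] | /BA [Ab ->]] //|a Aa].
rewrite leq_eqVlt ltnS => /orP [/eqP ak|akM].
  have [b inb lba] := Bmin a (conj Aa ak).
  exists b; first by apply/List.in_app_iff; right.
  by split=> //; have [_ ->] := BA b inb.
have [b inb lba] := B'min a Aa akM.
by exists b => //; apply/List.in_app_iff; left.
Qed.

(* A [k]-basis [B0] of [A] bounds the [k]-th coordinates of its elements by
   some [M]; elements of [A] beyond [M] are dominated through [B0], and the
   others lie in the finitely many slices [a k = 0, ..., M]. *)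
Lemma finitely_basedS k : finitely_based k -> finitely_based k.+1.
Proof.
move=> FBk A; have [B0 [B0A B0min]] := FBk A.
have [M B0M] : exists M, forall b, List.In b B0 -> b k <= M.
  elim: B0 {B0A B0min} => [|c B0 [M IH]]; first by exists 0.
  exists (maxn (c k) M) => b [<-|/IH bM]; first exact: leq_maxl.
  exact: leq_trans bM (leq_maxr _ _).
have [B [BA Bmin]] := finitely_based_slices FBk A M.
exists B; split=> [b /BA [] //|a Aa].
have le_uptoS b : le_upto k b a -> b k <= a k -> le_upto k.+1 b a.
  by move=> lba bk i; rewrite ltnS leq_eqVlt => /orP [/eqP ->|/lba].
have [ak|akM] := leqP (a k) M.
  have [b inb [lba bak]] := Bmin a Aa ak.
  by exists b => //; apply: le_uptoS => //; rewrite bak.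
have [b0 inb0 lb0a] := B0min a Aa.
have [b inb [lbb0 bb0]] := Bmin b0 (B0A b0 inb0) (B0M b0 inb0).
exists b => //; apply: le_uptoS; first exact: le_upto_trans lbb0 lb0a.
by rewrite bb0 ltnW // (leq_ltn_trans (B0M b0 inb0) akM).
Qed.

Lemma dickson k : finitely_based k.
Proof. by elim: k => [|k /finitely_basedS //]; exact: finitely_based0. Qed.

Local Open Scope ring_scope.

Lemma int_box_finite (n N : nat) : exists Q : seq 'rV[int]_n,
  forall z : 'rV[int]_n, (forall j, `|z 0 j| <= N%:Z) -> z \in Q.
Proof.
pose g (f : {ffun 'I_n -> 'I_(N + N).+1}) : 'rV[int]_n :=
  \row_j ((f j : nat)%:Z - N%:Z).
exists [seq g f | f <- enum {ffun 'I_n -> 'I_(N + N).+1}] => z zN.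
have zN0 j : 0 <= z 0 j + N%:Z.
  by rewrite -lerBlDr sub0r; have := zN j; rewrite ler_norml => /andP [].
apply/mapP; exists [ffun j => inord (absz (z 0 j + N%:Z))]; first by rewrite mem_enum.
apply/rowP => j; rewrite /g !mxE ffunE inordK; first by rewrite gez0_abs ?addrK.
rewrite ltnS -lez_nat abszE ger0_norm // PoszD lerD2r.
by have := zN j; rewrite ler_norml => /andP [].
Qed.

Section LatticePoints.
Variables (R : realType) (n : nat) (V : seq 'rV[R]_n).

Lemma latPt_bounded :
  exists N : nat, forall z, latPt V z -> forall j, `|z 0 j| <= N%:Z.
Proof.
pose C : R := \sum_(i < size V) \sum_(j < n) `|V`_i 0 j|.
have C0 : 0 <= C by apply: sumr_ge0 => i _; apply: sumr_ge0.
have VC (i : 'I_(size V)) j : `|V`_i 0 j| <= C.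
  rewrite /C (bigD1 i) //= (bigD1 j) //= -addrA lerDl.
  by apply: addr_ge0; apply: sumr_ge0 => *; [apply: normr_ge0 | apply: sumr_ge0].
exists (Num.bound C) => z [lam [lam0 [lam1 zE]]] j.
have zj : (z 0 j)%:~R = \sum_i lam i * V`_i 0 j :> R.
  have := congr1 (fun M : 'M_(1, n) => M 0 j) zE.
  by rewrite mxE summxE /= => ->; apply: eq_bigr => i _; rewrite mxE.
have zC : `|z 0 j|%:~R <= C :> R.
  rewrite intr_norm zj; apply: le_trans (ler_norm_sum _ _ _) _.
  apply: le_trans (_ : \sum_i lam i * C <= C).
    by apply: ler_sum => i _; rewrite normrM ger0_norm //; apply: ler_wpM2l.
  by rewrite -mulr_suml lam1 mul1r.
have := le_lt_trans zC (archi_boundP C0).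
by rewrite -[(Num.bound C)%:R]/((Num.bound C)%:Z%:~R : R) ltr_int => /ltW.
Qed.

Lemma latPt_finite : exists P : seq 'rV[int]_n, forall z, latPt V z <-> z \in P.
Proof.
have [N zN] := latPt_bounded; have [Q inQ] := int_box_finite n N.
exists [seq z <- Q | `[< latPt V z >]] => z; rewrite mem_filter.
split=> [Lz|/andP [/asboolP //]].
by apply/andP; split; [apply/asboolP | apply: inQ; exact: zN].
Qed.

End LatticePoints.

Section AffineDegree.
Variables (R : realType) (n : nat) (V : seq 'rV[R]_n).

Lemma inShM_add s d s' d' :
  inShM V s d -> inShM V s' d' -> inShM V (s + s') (d + d').
Proof.
elim=> [|a s1 d1 La _ IH] hs'; first by rewrite add0r add0n.
by rewrite -addrA addSn; apply: Shadd => //; exact: IH.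
Qed.

Lemma inShM_inSM s d : inShM V s d -> inSM V s.
Proof. by elim=> [|a s1 d1 La _ IH]; [exact: SM0 | exact: SMadd]. Qed.

Lemma inSM_inShM s : inSM V s -> exists d, inShM V s d.
Proof.
elim=> [|a s1 La _ [d IH]]; first by exists 0%N; exact: Sh0.
by exists d.+1; exact: Shadd.
Qed.

Lemma isAdeg_exists s : inSM V s -> exists d, isAdeg V s d.
Proof.
case/inSM_inShM=> d sd; have hd : exists d, `[< inShM V s d >].
  by exists d; apply/asboolP.
case: (ex_minnP hd) => d0 /asboolP sd0 d0min.
by exists d0; split=> // d' /asboolP /d0min.
Qed.

Lemma isAdeg_uniq s d d' : isAdeg V s d -> isAdeg V s d' -> d = d'.
Proof. by move=> [sd dmin] [sd' d'min]; apply/eqP; rewrite eqn_leq dmin ?d'min. Qed.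

Lemma isAdeg_inSM s d : isAdeg V s d -> inSM V s.
Proof. by case=> /inShM_inSM. Qed.

Lemma isAdeg_subadd s ds t dt d : isAdeg V s ds -> isAdeg V t dt ->
  isAdeg V (s + t) d -> (d <= ds + dt)%N.
Proof. by move=> [sd _] [td _] [_ dmin]; apply: dmin; exact: inShM_add. Qed.

Lemma sdiv_intro s t ds dt : isAdeg V s ds -> inShM V t dt ->
  isAdeg V (s + t) (ds + dt) -> sdiv V s (s + t).
Proof.
move=> As td Ast; have [et At] := isAdeg_exists (inShM_inSM td).
have etdt : (et <= dt)%N by case: At => _; apply.
have : (ds + dt <= ds + et)%N by exact: isAdeg_subadd As At Ast.
rewrite leq_add2l => dtet; have eet : et = dt by apply/eqP; rewrite eqn_leq etdt.
subst et; exists ds, (ds + dt)%N; split=> //.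
by exists t, dt; split=> //; exists ds, dt, (ds + dt)%N.
Qed.

Lemma sdiv_cofactor s r : sdiv V s r -> exists t ds dt,
  [/\ s + t = r, isAdeg V s ds, isAdeg V t dt & isAdeg V r (ds + dt)].
Proof.
case=> _ [_ [_ _ [t [_ [_ str _ [es [et [er [As At Ar eer]]]]]]]]].
by exists t, es, et; rewrite eer.
Qed.

End AffineDegree.

Section SparseOrder.
Variables (R : realType) (n : nat) (V : seq 'rV[R]_n).
Variable lt : 'rV[int]_n -> 'rV[int]_n -> Prop.
Hypothesis hlt : monomialOrder V lt.
Local Notation sLt := (sparseLt V lt).

Lemma sparseLt_irr s : ~ sLt s s.
Proof.
case=> ds [ds' [As As' hss]]; rewrite (isAdeg_uniq As' As) ltnn in hss.
by case: hss => [//|[_]]; case: hlt => irr _ _ _ _; apply: irr; exact: isAdeg_inSM As.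
Qed.

Lemma sparseLt_trans s t u : sLt s t -> sLt t u -> sLt s u.
Proof.
case: hlt => _ ltr _ _ _ [ds [dt [As At hst]]] [dt' [du [At' Au htu]]].
rewrite (isAdeg_uniq At' At) in htu; exists ds, du; split=> //.
have Ss := isAdeg_inSM As; have St := isAdeg_inSM At; have Su := isAdeg_inSM Au.
case: hst htu => [lst|[est lst]] [ltu|[etu ltu]].
- by left; exact: ltn_trans lst ltu.
- by left; rewrite -etu.
- by left; rewrite est.
- by right; split; [rewrite est | exact: ltr Ss St Su lst ltu].
Qed.

Lemma sparseLt_total s t : inSM V s -> inSM V t -> s <> t -> sLt s t \/ sLt t s.
Proof.
case: hlt => _ _ ltot _ _ Ss St nst.
have [ds As] := isAdeg_exists Ss; have [dt At] := isAdeg_exists St.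
have [l|l|e] := ltngtP ds dt.
- by left; exists ds, dt; split=> //; left.
- by right; exists dt, ds; split=> //; left.
case: (ltot s t Ss St nst) => l.
  by left; exists ds, dt; split=> //; right.
by right; exists dt, ds; split=> //; right.
Qed.

Lemma sparseLt_addr v s t ds dt : sLt v s -> isAdeg V s ds -> isAdeg V t dt ->
  isAdeg V (s + t) (ds + dt) -> sLt (v + t) (s + t).
Proof.
case=> dv [ds' [Av As' hvs]] As At Ast; rewrite (isAdeg_uniq As' As) in hvs.
have Sv := isAdeg_inSM Av; have Ss := isAdeg_inSM As; have St := isAdeg_inSM At.
have [du Au] := isAdeg_exists (inShM_inSM (inShM_add Av.1 At.1)).
have le_du : (du <= dv + dt)%N by exact: isAdeg_subadd Av At Au.
exists du, (ds + dt)%N; split=> //; case: hvs => [ltd|[eqd lvs]].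
  by left; apply: leq_ltn_trans le_du _; rewrite ltn_add2r.
move: le_du; rewrite eqd leq_eqVlt => /orP [/eqP edu|]; last by left.
by right; split=> //; case: hlt => _ _ _ ltD _; apply: ltD.
Qed.

Lemma sparseLt_minimal (P : 'rV[int]_n -> Prop) : (exists s, inSM V s /\ P s) ->
  exists m, [/\ inSM V m, P m & forall s, inSM V s -> P s -> ~ sLt s m].
Proof.
case=> s0 [Ss0 Ps0]; have [d0 As0] := isAdeg_exists Ss0.
have hD : exists d, `[< exists s, P s /\ isAdeg V s d >].
  by exists d0; apply/asboolP; exists s0.
case: (ex_minnP hD) => D /asboolP [sD [PsD AsD]] Dmin.
have [m [Sm [Pm Am] mmin]] : exists m, [/\ inSM V m, P m /\ isAdeg V m D &
    forall s, inSM V s -> P s /\ isAdeg V s D -> ~ lt s m].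
  by case: hlt => _ _ _ _ wo; apply: wo; exists sD; split=> //; exact: isAdeg_inSM AsD.
exists m; split=> // s Ss Ps [ds [dm [As Am' hsm]]].
rewrite (isAdeg_uniq Am' Am) in hsm; case: hsm => [ltd|[eqd lsm]].
  by have := Dmin ds (asboolT (ex_intro _ s (conj Ps As))); rewrite leqNgt ltd.
by apply: mmin lsm => //; rewrite -eqd.
Qed.

Lemma sparseLt_max_seq (l : seq 'rV[int]_n) : l != [::] ->
  (forall s, s \in l -> inSM V s) ->
  exists2 m, m \in l & forall t, t \in l -> t <> m -> sLt t m.
Proof.
elim: l => [//|x l IH] _ Sl.
have Sx : inSM V x by apply: Sl; rewrite mem_head.
have [->|lne] := eqVneq l [::].
  by exists x; rewrite ?mem_head // => t; rewrite inE => /eqP.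
have [m ml mmax] : exists2 m, m \in l & forall t, t \in l -> t <> m -> sLt t m.
  by apply: IH lne _ => s sl; apply: Sl; rewrite in_cons sl orbT.
have Sm : inSM V m by apply: Sl; rewrite in_cons ml orbT.
have [->|xm] := eqVneq x m.
  exists m; first exact: mem_head.
  by move=> t; rewrite in_cons => /predU1P [-> /(_ erefl) []|/mmax].
case: (sparseLt_total Sx Sm (elimN eqP xm)) => hxm.
  exists m; first by rewrite in_cons ml orbT.
  by move=> t; rewrite in_cons => /predU1P [->|/mmax].
exists x; first exact: mem_head.
move=> t; rewrite in_cons => /predU1P [-> //|tl] tx.
have [-> //|tm] := eqVneq t m.
exact: sparseLt_trans (mmax t tl (elimN eqP tm)) hxm.
Qed.

Variable K : fieldType.
Implicit Types f : {malg K['rV[int]_n]}.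

Lemma isLM_uniq f s s' : isLM sLt f s -> isLM sLt f s' -> s = s'.
Proof.
move=> [sf smax] [s'f s'max]; apply: contrapT => ss'.
apply: (@sparseLt_irr s); apply: sparseLt_trans (s'max s sf ss') _.
by apply: smax => // es; exact: ss'.
Qed.

Lemma isLM_exists f : inKS V f -> f != 0 -> exists s, isLM sLt f s.
Proof.
move=> Sf fn0; have : (msupp f : seq _) != [::].
  apply: contraNneq fn0 => f0; apply/eqP/malgP => k.
  by rewrite mcoeff0 mcoeff_outdom // -[k \in _]/(k \in (msupp f : seq _)) f0.
by case/sparseLt_max_seq/(_ Sf) => m mf mmax; exists m.
Qed.

End SparseOrder.

Section SemigroupAlgebra.
Variables (n : nat) (K : fieldType).
Implicit Types f g : {malg K['rV[int]_n]}.

Lemma smulEfsubset (D : {fset 'rV[int]_n}) f g : (msupp f `<=` D)%fset ->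
  smul f g = \sum_(s <- D) \sum_(t <- msupp g) << f@_s * g@_t *g (s + t) >>.
Proof.
move=> fD; rewrite /smul (big_fset_incl _ fD) // => s _ /mcoeff_outdom ->.
by rewrite big1 // => t _; rewrite mul0r monalgU0.
Qed.

Lemma smul0l g : smul 0 g = 0.
Proof. by rewrite /smul msupp0 big_seq_fset0. Qed.

Lemma smulDl f1 f2 g : smul (f1 + f2) g = smul f1 g + smul f2 g.
Proof.
rewrite (smulEfsubset _ (msuppD_le f1 f2)).
rewrite (smulEfsubset _ (fsubsetUl (msupp f1) (msupp f2))).
rewrite (smulEfsubset _ (fsubsetUr (msupp f1) (msupp f2))) -big_split /=.
apply: eq_bigr => s _; rewrite -big_split /=; apply: eq_bigr => t _.
by rewrite mcoeffD mulrDl monalgUD.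
Qed.

Lemma mcoeff_smulU (c : K) (t u : 'rV[int]_n) g :
  (smul << c *g t >> g)@_u = \sum_(v <- msupp g) (c * g@_v) *+ (t + v == u).
Proof.
rewrite (smulEfsubset _ msuppU_le) big_seq_fset1 raddf_sum /=.
by apply: eq_bigr => v _; rewrite mcoeffUU mcoeffU.
Qed.

Variables (R : realType) (V : seq 'rV[R]_n).

Lemma inKS0 : inKS V (0 : {malg K['rV[int]_n]}).
Proof. by move=> s; rewrite msupp0. Qed.

Lemma inKSD f g : inKS V f -> inKS V g -> inKS V (f + g).
Proof.
move=> Sf Sg s /(fsubsetP (msuppD_le f g)).
by rewrite in_fsetU => /orP [/Sf|/Sg].
Qed.

Lemma inKSU (c : K) t : inSM V t -> inKS V << c *g t >>.
Proof. by move=> St s /(fsubsetP msuppU_le); rewrite inE => /eqP ->. Qed.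

Definition in_span (G : seq {malg K['rV[int]_n]}) f :=
  exists h : 'I_(size G) -> {malg K['rV[int]_n]},
    (forall i, inKS V (h i)) /\ f = \sum_i smul (h i) G`_i.

Lemma in_span0 G : in_span G 0.
Proof.
exists (fun _ => 0); split=> [i|]; first exact: inKS0.
by rewrite big1 // => i _; rewrite smul0l.
Qed.

Lemma in_span_add_smul G f c g :
  in_span G f -> g \in G -> inKS V c -> in_span G (f + smul c g).
Proof.
case=> h [Sh ->] gG Sc; have gi : (index g G < size G)%N by rewrite index_mem.
pose i0 : 'I_(size G) := Ordinal gi.
exists (fun i => h i + (if i == i0 then c else 0)); split.
  by move=> i; apply: inKSD => //; case: eqP => _; [exact: Sc | exact: inKS0].
under [RHS]eq_bigr do rewrite smulDl; rewrite big_split /=; congr (_ + _).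
rewrite (bigD1 i0) //= eqxx nth_index // big1 ?addr0 // => i /negbTE ->.
exact: smul0l.
Qed.

End SemigroupAlgebra.

Section ExponentVectors.
Variables (R : realType) (n : nat) (V : seq 'rV[R]_n) (P : seq 'rV[int]_n).
Hypothesis hP : forall z, latPt V z <-> z \in P.

Definition comb (a : nat -> nat) : 'rV[int]_n := \sum_(i < size P) P`_i *+ a i.
Definition weight (a : nat -> nat) : nat := (\sum_(i < size P) a i)%N.

Lemma combD a b : comb (fun i => a i + b i)%N = comb a + comb b.
Proof. by rewrite /comb -big_split /=; apply: eq_bigr => i _; rewrite mulrnDr. Qed.

Lemma weightD a b : weight (fun i => a i + b i)%N = (weight a + weight b)%N.
Proof. by rewrite /weight big_split. Qed.

Lemma inShM_comb a : inShM V (comb a) (weight a).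
Proof.
apply: (big_ind2 (inShM V)); [exact: Sh0 | by move=> *; exact: inShM_add |].
move=> i _; have Pi : latPt V P`_i by apply/hP; exact: mem_nth.
by elim: (a i) => [|k IH]; [exact: Sh0 | rewrite mulrS; exact: Shadd].
Qed.

Lemma inShM_combP s d : inShM V s d -> exists a, comb a = s /\ weight a = d.
Proof.
elim=> [|p s1 d1 Lp _ [a [<- <-]]].
  by exists (fun _ => 0%N); rewrite /comb /weight !big1.
have pP : (index p P < size P)%N by rewrite index_mem; apply/hP.
pose ip := Ordinal pP; pose e i := (i == ip :> nat) : nat.
have e0 (T : Type) (F : nat -> T) j : j != ip -> F (e j) = F 0%N.
  by rewrite /e -(inj_eq val_inj) => /negbTE ->.
exists (fun i => a i + e i)%N; rewrite combD weightD addrC addnC; split.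
  rewrite /comb (bigD1 ip) //= /e eqxx nth_index; last exact/hP.
  by rewrite big1 ?addr0 // => j /(e0 _ (fun k => P`_j *+ k)).
by rewrite /weight (bigD1 ip) //= /e eqxx big1 // => j /(e0 _ id).
Qed.

Lemma comb_le_upto a b : le_upto (size P) b a ->
  comb a = comb b + comb (fun i => a i - b i)%N /\
  weight a = (weight b + weight (fun i => a i - b i))%N.
Proof.
move=> ba; rewrite -combD -weightD; split; apply: eq_bigr => i _; by rewrite subnKC ?ba.
Qed.

End ExponentVectors.

Section SparseGroebner.
Variables (K : fieldType) (R : realType) (n : nat) (V : seq 'rV[R]_n).
Variables (I : {malg K['rV[int]_n]} -> Prop) (lt : 'rV[int]_n -> 'rV[int]_n -> Prop).
Hypotheses (hI : isIdeal V I) (hlt : monomialOrder V lt).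
Local Notation MA := {malg K['rV[int]_n]}.
Local Notation sLt := (sparseLt V lt).

Definition lead_divisors (G : seq MA) := forall f, I f -> f <> 0 ->
  exists2 g, g \in G &
    exists sg sf, [/\ isLM sLt g sg, isLM sLt f sf & sdiv V sg sf].

Lemma msupp_reduction_lt (f g : MA) m sg t ds dt : inKS V g ->
  isLM sLt f m -> isLM sLt g sg -> sg + t = m ->
  isAdeg V sg ds -> isAdeg V t dt -> isAdeg V m (ds + dt) ->
  forall u, u \in msupp (f - smul << (f@_m / g@_sg) *g t >> g) -> sLt u m.
Proof.
move=> Sg [mf fmax] [sgg gmax] e Asg At Am u.
rewrite -mcoeff_neq0 mcoeffB mcoeff_smulU.
have [->|um] := eqVneq u m.
  rewrite (big_fsetD1 sg) //= [t + sg]addrC e eqxx mulr1n.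
  rewrite big1_fset ?addr0 ?mulfVK ?subrr ?eqxx ?mcoeff_neq0 // => v.
  rewrite !inE => /andP [vsg _] _; case: eqP => // tv.
  by case/eqP: vsg; apply: (addrI t); rewrite tv -e addrC.
have [uf _|uf] := boolP (u \in msupp f); first by apply: fmax => //; exact/eqP.
rewrite (mcoeff_outdom uf) sub0r oppr_eq0 => gu.
have [v vg tvu] : exists2 v, v \in msupp g & t + v = u.
  apply: contrapT => nv; case/eqP: gu; rewrite big1_fset // => v vg _.
  by case: eqP => // tv; case: nv; exists v.
subst u; have vsg : v <> sg by move=> ev; case/eqP: um; rewrite ev addrC.
have := sparseLt_addr hlt (gmax v vg vsg) Asg At.
by rewrite e addrC; apply.
Qed.

Lemma lead_divisors_span (G : seq MA) : (forall g, g \in G -> I g) ->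
  lead_divisors G -> forall f, I f -> in_span V G f.
Proof.
case: hI => IS _ IB IM GI Gdiv f If; apply: contrapT => nf.
pose bad s := exists f, [/\ I f, f <> 0, isLM sLt f s & ~ in_span V G f].
have [|m [_ [f0 [If0 f0n0 LMf0 nf0]] mmin]] := sparseLt_minimal hlt (P := bad).
  have fn0 : f != 0 by apply/eqP => f0; apply: nf; rewrite f0; exact: in_span0.
  have [s LMs] := isLM_exists hlt (IS _ If) fn0.
  by exists s; split; [exact: IS If _ LMs.1 | exists f; split=> //; exact/eqP].
have [g gG [sg [sf [LMg LMf /sdiv_cofactor [t [ds [dt [e Asg At Am]]]]]]]] :=
  Gdiv f0 If0 f0n0.
rewrite (isLM_uniq hlt LMf LMf0) {sf LMf} in e Am.
pose c : MA := << (f0@_m / g@_sg) *g t >>.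
have Sc : inKS V c by apply: inKSU; exact: isAdeg_inSM At.
have If1 : I (f0 - smul c g) by apply: IB => //; apply: IM => //; exact: GI.
suff : in_span V G (f0 - smul c g) by move/in_span_add_smul/(_ gG Sc); rewrite subrK.
apply: contrapT => nf1; have [f1_0|f1n0] := eqVneq (f0 - smul c g) 0.
  by apply: nf1; rewrite f1_0; exact: in_span0.
have [s LMs] := isLM_exists hlt (IS _ If1) f1n0.
apply: (mmin s); first exact: IS If1 _ LMs.1.
  by exists (f0 - smul c g); split=> //; exact/eqP.
exact: msupp_reduction_lt (IS _ (GI _ gG)) LMf0 LMg e Asg At Am _ LMs.1.
Qed.

Lemma lead_divisors_exist : exists2 G : seq MA,
  forall g, g \in G -> I g & lead_divisors G.
Proof.
case: hI => IS _ _ _; have [P hP] := latPt_finite V.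
pose lead_exp a := exists f, [/\ I f, f <> 0, isLM sLt f (comb P a) &
  isAdeg V (comb P a) (weight P a)].
have [B [Blead Bmin]] := dickson (size P) lead_exp.
have [G GI GB] : exists2 G : seq MA, forall g, g \in G -> I g &
    forall b, List.In b B -> exists2 g, g \in G & isLM sLt g (comb P b).
  elim: B Blead {Bmin} => [|b B IH] Blead; first by exists [::].
  have [G GI GB] := IH (fun b' inb' => Blead b' (or_intror inb')).
  have [f [If _ LMf _]] := Blead b (or_introl erefl).
  exists (f :: G) => [g|b' [<-|/GB [g gG LMg]]].
  - by rewrite in_cons => /predU1P [->|/GI].
  - by exists f; rewrite ?mem_head.
  - by exists g; rewrite // in_cons gG orbT.
exists G => // f If fn0.
have [sf LMf] := isLM_exists hlt (IS _ If) (introN eqP fn0).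
have [d Asf] := isAdeg_exists (IS _ If _ LMf.1).
have [a [ea wa]] := inShM_combP hP Asf.1; rewrite -ea -wa in LMf Asf.
have [b inb ba] := Bmin a (ex_intro _ f (And4 If fn0 LMf Asf)).
have [g gG LMg] := GB b inb; have [_ [_ _ _ Ab]] := Blead b inb.
exists g => //; exists (comb P b), (comb P a); split=> //.
have [comb_ab weight_ab] := comb_le_upto ba.
rewrite comb_ab; apply: sdiv_intro Ab (inShM_comb hP _) _.
by rewrite -comb_ab -weight_ab.
Qed.

End SparseGroebner.

Theorem mainTheorem6 (K : fieldType) (hK : [pchar K] =i pred0)
    (R : realType) (n : nat) (V : seq 'rV[R]_n)
    (h0M : inPolytope V 0) (hpt : pointedSM V)
    (I : {malg K['rV[int]_n]} -> Prop) (hI : isIdeal V I)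
    (lt : 'rV[int]_n -> 'rV[int]_n -> Prop) (hlt : monomialOrder V lt) :
  exists G : seq {malg K['rV[int]_n]}, sparseGB V lt I G.
Proof.
have [G GI Gdiv] := lead_divisors_exist hI hlt.
by exists G; split=> // f /(lead_divisors_span hI hlt GI Gdiv).
Qed.
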